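(* Let $X$ be a nonempty set. A rack structure $\rhd$ on $X$ is trivial (i.e. $x\rhd y=x$ for all $x,y\in X$) if and only if $(X,\rhd)$ acts faithfully on some nonempty set $M$ and the action satisfies $(m\cdot x)\cdot y=(m\cdot y)\cdot x$ for all $x,y\in X$, $m\in M$.
   Context: A rack is a set $X$ with a binary operation $\rhd$ such that each $x\mapsto x\rhd y$ is bijective and $(x\rhd y)\rhd z=(x\rhd z)\rhd(y\rhd z)$. A stabilizing family of $X$ is a finite family $(u_1,\ldots,u_s)$ with $(\cdots(x\rhd u_1)\cdots)\rhd u_s=x$ for all $x$. A rack action of $X$ on a set $M$ is a map $(m,x)\mapsto m\cdot x$ such that each $m\mapsto m\cdot x$ is a bijection, $(m\cdot x)\cdot y=(m\cdot y)\cdot(x\rhd y)$, and for every stabilizing family $(u_1,\ldots,u_s)$ and every cyclic shift $\sigma$ of $\{1,\ldots,s\}$, $(\cdots(m\cdot u_1)\cdots)\cdot u_s=(\cdots(m\cdot u_{\sigma(1)})\cdots)\cdot u_{\sigma(s)}$. The action is faithful if for each $m\in M$ the map $X\ni x\mapsto m\cdot x\in M$ is injective. *)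

From Stdlib Require Import List.
Import ListNotations.

Definition bijective {A B : Type} (f : A -> B) : Prop :=
  exists g : B -> A, (forall a, g (f a) = a) /\ (forall b, f (g b) = b).

Definition is_rack {X : Type} (op : X -> X -> X) : Prop :=
  (forall y, bijective (fun x => op x y)) /\
  (forall x y z, op (op x y) z = op (op x z) (op y z)).

Definition rack_iter {X : Type} (op : X -> X -> X) (x : X) (us : list X) : X :=
  fold_left op us x.

Definition stabilizing {X : Type} (op : X -> X -> X) (us : list X) : Prop :=
  forall x, rack_iter op x us = x.

Definition act_iter {X M : Type} (act : M -> X -> M) (m : M) (us : list X) : M :=
  fold_left act us m.

Definition rotate {A : Type} (k : nat) (l : list A) : list A :=
  skipn k l ++ firstn k l.

Definition is_rack_action {X M : Type} (op : X -> X -> X) (act : M -> X -> M)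
  : Prop :=
  (forall x, bijective (fun m => act m x)) /\
  (forall m x y, act (act m x) y = act (act m y) (op x y)) /\
  (forall us, stabilizing op us ->
     forall k, k < length us -> forall m, act_iter act m us = act_iter act m (rotate k us)).

Definition faithful_action {X M : Type} (act : M -> X -> M) : Prop :=
  forall m x y, act m x = act m y -> x = y.

Definition trivial_rack {X : Type} (op : X -> X -> X) : Prop :=
  forall x y, op x y = x.

(* A trivial rack acts on the free abelian group Z^(X) by m . x := m + e_x:
   these translations are faithful and commute, and for commuting actions the
   cyclic-shift condition is automatic, since act_iter only depends on the
   multiset of the family.  Conversely, compatibility and commutation give
   (m . y) . x = (m . x) . y = (m . y) . (x |> y), so faithfulness at m . y
   forces x |> y = x. *)

From Stdlib Require Import List Permutation ZArith Lia ClassicalEpsilon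
  FunctionalExtensionality.

Definition commuting_action {X M : Type} (act : M -> X -> M) : Prop :=
  forall x y m, act (act m x) y = act (act m y) x.

Lemma act_iter_perm {X M : Type} (act : M -> X -> M) (us vs : list X) :
  commuting_action act -> Permutation us vs ->
  forall m, act_iter act m us = act_iter act m vs.
Proof.
  intros Hcomm Hperm; unfold act_iter.
  induction Hperm as [| x us vs _ IH | x y us | us vs ws _ IH1 _ IH2];
    intros m; simpl.
  - reflexivity.
  - apply IH.
  - rewrite Hcomm; reflexivity.
  - rewrite IH1; apply IH2.
Qed.

Lemma Permutation_rotate {A : Type} (k : nat) (l : list A) :
  Permutation l (rotate k l).
Proof.
  unfold rotate; rewrite <- (firstn_skipn k l) at 1.
  apply Permutation_app_comm.
Qed.

Lemma trivial_rack_commuting_action {X M : Type} (op : X -> X -> X)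
    (act : M -> X -> M) :
  trivial_rack op -> (forall x, bijective (fun m => act m x)) ->
  commuting_action act -> is_rack_action op act.
Proof.
  intros Htriv Hbij Hcomm; split; [exact Hbij | split].
  - intros m x y; rewrite Htriv; apply Hcomm.
  - intros us _ k _ m; apply act_iter_perm, Permutation_rotate; exact Hcomm.
Qed.

Lemma faithful_commuting_action_trivial_rack {X M : Type} (op : X -> X -> X)
    (act : M -> X -> M) :
  inhabited M -> is_rack_action op act -> faithful_action act ->
  commuting_action act -> trivial_rack op.
Proof.
  intros [m] [_ [Hcompat _]] Hfaith Hcomm x y.
  apply (Hfaith (act m y)).
  rewrite <- Hcompat; apply Hcomm.
Qed.

Section IndicatorAction.

Variable X : Type.
Hypothesis eq_dec : forall a b : X, {a = b} + {a <> b}.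

Definition indicator (x z : X) : Z := if eq_dec z x then 1%Z else 0%Z.

Definition shift_indicator (m : X -> Z) (x : X) : X -> Z :=
  fun z => (m z + indicator x z)%Z.

Lemma shift_indicator_bijective (x : X) :
  bijective (fun m => shift_indicator m x).
Proof.
  exists (fun m z => (m z - indicator x z)%Z).
  unfold shift_indicator; split; intros m;
    apply functional_extensionality; intros z; lia.
Qed.

Lemma shift_indicator_commuting : commuting_action shift_indicator.
Proof.
  intros x y m; apply functional_extensionality; intros z.
  unfold shift_indicator; lia.
Qed.

Lemma shift_indicator_faithful : faithful_action shift_indicator.
Proof.
  intros m x y Hxy.
  apply (f_equal (fun f => f x)) in Hxy; unfold shift_indicator, indicator in Hxy.
  destruct (eq_dec x x) as [_ | Hneq]; [| contradiction].
  destruct (eq_dec x y) as [Heq | _]; [exact Heq | lia].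
Qed.

End IndicatorAction.

Definition classical_eq_dec {X : Type} (a b : X) : {a = b} + {a <> b} :=
  excluded_middle_informative (a = b).

Theorem mainTheorem18 (X : Type) (x0 : X) (op : X -> X -> X) :
  is_rack op ->
  (trivial_rack op <->
   exists (M : Type) (act : M -> X -> M),
     inhabited M /\ is_rack_action op act /\ faithful_action act /\
     (forall (x y : X) (m : M), act (act m x) y = act (act m y) x)).
Proof.
  intros _; split.
  - intros Htriv.
    set (act := shift_indicator X classical_eq_dec).
    exists (X -> Z), act.
    split; [exact (inhabits (fun _ => 0%Z)) |].
    split; [| split].
    + apply trivial_rack_commuting_action; [exact Htriv | |].
      * apply shift_indicator_bijective.
      * apply shift_indicator_commuting.
    + apply shift_indicator_faithful.
    + apply shift_indicator_commuting.
  - intros [M [act [HM [Hrack [Hfaith Hcomm]]]]].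
    exact (faithful_commuting_action_trivial_rack op act HM Hrack Hfaith Hcomm).
Qed.
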